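(* Let $p$ be a prime and $X$ a countable set. For every $A\in\mathcal{B}(\mathbb{Q}_p(X))$ we have $\ker(A)=\operatorname{im}(A^* )^\perp$.
   Context: $\mathbb{Q}_p(X)$ is the set of maps $\xi:X\to\mathbb{Q}_p$ with $|\xi(i)|_p\le1$ for all but finitely many $i$, a $\mathbb{Z}_p$-module under coordinatewise operations, with the topology $\tau$ in which $A\subseteq\mathbb{Q}_p(X)$ is open iff for every finite $P\subseteq X$ the set $A\cap\big(\prod_{i\in P}\mathbb{Q}_p\times\prod_{j\in X\setminus P}\mathbb{Z}_p\big)$ is open in the product topology. $\mathcal{B}(\mathbb{Q}_p(X))$ is the set of $\tau$-continuous $\mathbb{Z}_p$-linear maps. The pairing is $\langle\xi,\eta\rangle=\iota\big(\sum_{i\in X}(\xi(i)\eta(i)+\mathbb{Z}_p)\big)\in S^1$ with $\iota:\mathbb{Q}_p/\mathbb{Z}_p\cong\mathbb{Z}[1/p]/\mathbb{Z}\hookrightarrow\mathbb{R}/\mathbb{Z}\cong S^1$ canonical. $A^*$ is the unique operator in $\mathcal{B}(\mathbb{Q}_p(X))$ with $\langle A\xi,\eta\rangle=\langle\xi,A^*\eta\rangle$ for all $\xi,\eta$. For $K\subseteq\mathbb{Q}_p(X)$, $K^\perp=\{\xi:\langle\xi,\eta\rangle=1\ \forall\eta\in K\}$ (trivial value of the pairing). *)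

(* Q_p is introduced through its defining property as the
   completion of (Q, |.|_p). *)
From HB Require Import structures.
From Stdlib Require List.
From mathcomp Require Import all_boot all_order all_algebra.
Set Implicit Arguments. Unset Strict Implicit. Unset Printing Implicit Defensive.
Import Order.TTheory GRing.Theory Num.Theory.
Local Open Scope ring_scope.

Definition padic_val_rat (p : nat) (q : rat) : int :=
  (logn p `|numq q|%N)%:Z - (logn p `|denq q|%N)%:Z.

Definition padic_abs (p : nat) (q : rat) : rat :=
  if q == 0 then 0 else (p%:R : rat) ^ (- padic_val_rat p q).

(* These
   properties characterize (Q_p, |.|_p) up to isometric isomorphism. *)
Record is_Qp (p : nat) (F : fieldType) (nrm : F -> rat) : Prop := {
  Qp_nrm_ge0 : forall x, 0 <= nrm x;
  Qp_nrm_eq0 : forall x, nrm x = 0 <-> x = 0;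
  Qp_nrmM : forall x y, nrm (x * y) = nrm x * nrm y;
  Qp_nrmD : forall x y, nrm (x + y) <= Num.max (nrm x) (nrm y);
  Qp_nrm_rat : forall q : rat, nrm (ratr q) = padic_abs p q;
  Qp_dense : forall (x : F) (e : rat), 0 < e ->
      exists q : rat, nrm (x - ratr q) < e;
  Qp_complete : forall u : nat -> F,
      (forall e : rat, 0 < e -> exists N, forall m n, (N <= m)%N -> (N <= n)%N ->
           nrm (u m - u n) < e) ->
      exists l : F, forall e : rat, 0 < e -> exists N, forall n, (N <= n)%N ->
           nrm (u n - l) < e }.

Section QpX.
Variables (F : fieldType) (nrm : F -> rat) (X : Type).

Definition QpX (xi : X -> F) : Prop :=
  exists s : seq X, forall i, ~ List.In i s -> nrm (xi i) <= 1.

Definition UP (P : seq X) (xi : X -> F) : Prop :=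
  forall j, ~ List.In j P -> nrm (xi j) <= 1.

(* tau-open subsets of Q_p(X): A is a subset of Q_p(X) and for each finite P,
   A ∩ U_P is open in U_P for the (subspace of the) product topology *)
Definition tau_open (A : (X -> F) -> Prop) : Prop :=
  (forall xi, A xi -> QpX xi) /\
  forall (P : seq X) xi, A xi -> UP P xi ->
    exists (J : seq X) (e : rat), 0 < e /\
      forall eta, UP P eta ->
        (forall j, List.In j J -> nrm (eta j - xi j) < e) -> A eta.

Definition tau_continuous (T : (X -> F) -> (X -> F)) : Prop :=
  forall O, tau_open O -> tau_open (fun xi => QpX xi /\ O (T xi)).

(* B(Q_p(X)): tau-continuous Z_p-linear maps Q_p(X) -> Q_p(X)
   (only the values on Q_p(X) matter) *)
Definition is_operator (T : (X -> F) -> (X -> F)) : Prop :=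
  [/\ forall xi, QpX xi -> QpX (T xi),
      forall xi eta, QpX xi -> QpX eta ->
        T (fun i => xi i + eta i) = (fun i => T xi i + T eta i),
      forall (a : F) xi, nrm a <= 1 -> QpX xi ->
        T (fun i => a * xi i) = (fun i => a * T xi i)
    & tau_continuous T].

(* c represents <xi, eta> in Q_p/Z_p: c = sum over a finite set of indices
   (without repetition) outside of which xi(i) eta(i) lies in Z_p *)
Definition pairing_rep (xi eta : X -> F) (c : F) : Prop :=
  exists s : seq X, List.NoDup s /\
    (forall i, ~ List.In i s -> nrm (xi i * eta i) <= 1) /\
    c = \sum_(i <- s) xi i * eta i.

(* <xi1, eta1> = <xi2, eta2> (equality in Q_p/Z_p, equivalently in S^1
   since iota is injective) *)
Definition pairing_eq (xi1 eta1 xi2 eta2 : X -> F) : Prop :=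
  exists c1 c2, pairing_rep xi1 eta1 c1 /\ pairing_rep xi2 eta2 c2 /\
    nrm (c1 - c2) <= 1.

Definition pairing_trivial (xi eta : X -> F) : Prop :=
  exists c, pairing_rep xi eta c /\ nrm c <= 1.

Definition is_adjoint (A B : (X -> F) -> (X -> F)) : Prop :=
  forall xi eta, QpX xi -> QpX eta -> pairing_eq (A xi) eta xi (B eta).

Definition perp (K : (X -> F) -> Prop) (xi : X -> F) : Prop :=
  QpX xi /\ forall eta, K eta -> pairing_trivial xi eta.

Definition kerop (A : (X -> F) -> (X -> F)) (xi : X -> F) : Prop :=
  QpX xi /\ A xi = (fun _ => 0).

Definition imop (B : (X -> F) -> (X -> F)) (eta : X -> F) : Prop :=
  exists xi, QpX xi /\ eta = B xi.

End QpX.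

(* A vector in the kernel of A pairs trivially with every A^* zeta, since
   <xi, A^* zeta> = <A xi, zeta> = <0, zeta>.  Conversely, if xi is orthogonal
   to the image of A^*, then <A xi, zeta> is trivial for every zeta; testing
   against zeta = a e_i shows that (A xi)(i) a lies in Z_p for every a in Q_p,
   which forces (A xi)(i) = 0 because 1/p is not in Z_p. *)
From Stdlib Require Import Classical FunctionalExtensionality.
From mathcomp Require Import all_boot all_order all_algebra.
Set Implicit Arguments. Unset Strict Implicit.
Import Order.TTheory GRing.Theory Num.Theory.
Local Open Scope ring_scope.

Record ultrametric_abs (F : fieldType) (nrm : F -> rat) : Prop := {
  abs_ge0 : forall x, 0 <= nrm x;
  abs_eq0 : forall x, nrm x = 0 <-> x = 0;
  absM : forall x y, nrm (x * y) = nrm x * nrm y;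
  abs_ultra : forall x y, nrm (x + y) <= Num.max (nrm x) (nrm y) }.

Lemma Qp_ultrametric_abs p (F : fieldType) (nrm : F -> rat) :
  is_Qp p nrm -> ultrametric_abs nrm.
Proof. by case=> *; split. Qed.

Section UnitBall.
Variables (F : fieldType) (nrm : F -> rat).
Hypothesis habs : ultrametric_abs nrm.

Lemma abs0 : nrm 0 = 0.
Proof. exact/(abs_eq0 habs). Qed.

Lemma abs1 : nrm 1 = 1.
Proof.
have nz1 : nrm 1 != 0 by apply/eqP => /(abs_eq0 habs)/eqP; rewrite oner_eq0.
by apply: (mulfI nz1); rewrite -(absM habs) !mulr1.
Qed.

Lemma absN x : nrm (- x) = nrm x.
Proof.
have sqN1 : nrm (-1) ^+ 2 = 1 ^+ 2 by rewrite expr2 -(absM habs) mulrNN mulr1 abs1.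
move/eqP: sqN1; rewrite eqrXn2 ?(abs_ge0 habs) // => /eqP absN1.
by rewrite -mulN1r (absM habs) absN1 mul1r.
Qed.

Lemma absD_le1 x y : nrm x <= 1 -> nrm y <= 1 -> nrm (x + y) <= 1.
Proof. by move=> hx hy; apply: le_trans (abs_ultra habs x y) _; rewrite ge_max hx hy. Qed.

Lemma absB_le1 x y : nrm x <= 1 -> nrm y <= 1 -> nrm (x - y) <= 1.
Proof. by move=> hx hy; rewrite absD_le1 ?absN. Qed.

Lemma abs_sum_le1 (X : Type) (s : seq X) (w : X -> F) :
  (forall j, List.In j s -> nrm (w j) <= 1) -> nrm (\sum_(j <- s) w j) <= 1.
Proof.
elim: s => [|x s IH] hs; first by rewrite big_nil abs0.
rewrite big_cons absD_le1 //; first by apply: hs; left.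
by apply: IH => j sj; apply: hs; right.
Qed.

Lemma abs_sumB_le1 (X : Type) (w : X -> F) (s s' : seq X) :
  List.NoDup s -> List.NoDup s' ->
  (forall j, List.In j s -> ~ List.In j s' -> nrm (w j) <= 1) ->
  (forall j, List.In j s' -> ~ List.In j s -> nrm (w j) <= 1) ->
  nrm (\sum_(j <- s) w j - \sum_(j <- s') w j) <= 1.
Proof.
elim: s s' => [|x s IH] s' uniq_s uniq_s' hs hs'.
  by rewrite big_nil sub0r absN abs_sum_le1 // => j /hs'; apply.
move/List.NoDup_cons_iff: uniq_s => [x_notin_s uniq_s].
have [x_in_s'|x_notin_s'] := classic (List.In x s'); last first.
  rewrite big_cons -addrA absD_le1 ?hs //; [by left|].
  apply: IH => // [j js|j js' nj]; first by apply: hs; right.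
  by apply: hs' => // -[eq_xj|//]; apply: x_notin_s'; rewrite eq_xj.
have [l1 [l2 def_s']] := List.in_split _ _ x_in_s'; subst s'.
have [uniq_l x_notin_l] := List.NoDup_remove _ _ _ uniq_s'.
rewrite big_cons big_cat big_cons /= addrCA -big_cat opprD addrACA subrr add0r.
apply: IH => // j js nj.
- apply: hs; [by right|]; move=> /(List.in_app_or l1) [j_l1|[eq_xj|j_l2]].
  + by apply: nj; apply: List.in_or_app; left.
  + by apply: x_notin_s; rewrite eq_xj.
  + by apply: nj; apply: List.in_or_app; right.
- apply: hs'.
    by case/(List.in_app_or l1): js => h; apply: List.in_or_app; [left|right; right].
  by case=> [eq_xj|//]; apply: x_notin_l; rewrite eq_xj.
Qed.

Variable X : Type.
Implicit Types u v : X -> F.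

Lemma pairing_rep_unique u v c c' :
  pairing_rep nrm u v c -> pairing_rep nrm u v c' -> nrm (c - c') <= 1.
Proof.
move=> [s [uniq_s [hs ->]]] [s' [uniq_s' [hs' ->]]].
by apply: abs_sumB_le1 => // j _ h; [apply: hs' | apply: hs].
Qed.

Lemma pairing_eq_sym u v u' v' :
  pairing_eq nrm u v u' v' -> pairing_eq nrm u' v' u v.
Proof.
by move=> [c [c' [rc [rc' hc]]]]; exists c', c; rewrite -absN opprB.
Qed.

Lemma pairing_eq_trivial u v u' v' :
  pairing_eq nrm u v u' v' -> pairing_trivial nrm u' v' -> pairing_trivial nrm u v.
Proof.
move=> [c [c' [rc [rc' hc]]]] [c'' [rc'' hc'']]; exists c; split=> //.
have -> : c = (c - c') + ((c' - c'') + c'') by rewrite !subrK.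
by rewrite absD_le1 // absD_le1 // (pairing_rep_unique rc' rc'').
Qed.

Lemma pairing_trivial0l v : pairing_trivial nrm (fun _ => 0) v.
Proof.
exists 0; rewrite abs0 ler01; split=> //.
by exists [::]; split; [constructor | split=> [i _|]; rewrite ?mul0r ?abs0 ?big_nil].
Qed.

Section PointVector.
Variables (f : X -> nat) (i : X) (a : F).
Hypothesis f_inj : injective f.

Definition point_vec : X -> F := fun j => if f j == f i then a else 0.

Lemma point_vec_QpX : QpX nrm point_vec.
Proof.
exists [:: i] => j nj; rewrite /point_vec.
by case: eqP => [/f_inj eq_ji|_]; [case: nj; left | rewrite abs0].
Qed.

Lemma pairing_rep_point_vec u : pairing_rep nrm u point_vec (u i * a).
Proof.
exists [:: i]; split; first by constructor; [case | constructor].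
split; last by rewrite big_seq1 /point_vec eqxx.
move=> j nj; rewrite /point_vec.
by case: eqP => [/f_inj eq_ji|_]; [case: nj; left | rewrite mulr0 abs0].
Qed.

Lemma pairing_trivial_point_vec u :
  pairing_trivial nrm u point_vec -> nrm (u i * a) <= 1.
Proof.
move=> [c [rc hc]]; rewrite -(subKr c (u i * a)).
by rewrite absB_le1 // (pairing_rep_unique rc (pairing_rep_point_vec u)).
Qed.

End PointVector.
End UnitBall.

Lemma padic_abs_p p : prime p -> padic_abs p p%:R = p%:R^-1.
Proof.
move=> p_pr; have p_nz : (p%:R : rat) != 0 by rewrite pnatr_eq0 -lt0n prime_gt0.
rewrite /padic_abs /padic_val_rat (negbTE p_nz).
have -> : (p%:R : rat) = (p%:Z)%:Q by [].
by rewrite numq_int denq_int /= logn_prime // eqxx logn1 subr0 exprN1.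
Qed.

Lemma Qp_mul_le1_eq0 p (F : fieldType) (nrm : F -> rat) (x : F) :
  prime p -> is_Qp p nrm -> (forall a, nrm (x * a) <= 1) -> x = 0.
Proof.
move=> p_pr hF hx; have habs := Qp_ultrametric_abs hF.
have p_gt1 : (1 : rat) < p%:R by rewrite ltr1n prime_gt1.
have p_nz : (p%:R : rat) != 0 by rewrite pnatr_eq0 -lt0n prime_gt0.
have abs_p : nrm p%:R = p%:R^-1.
  by rewrite -(ratr_nat F p) (Qp_nrm_rat hF) padic_abs_p.
have pF_nz : (p%:R : F) != 0.
  by apply: (contra_neq _ (invr_neq0 p_nz)) => p0; rewrite -abs_p p0 abs0.
have abs_invp : nrm p%:R^-1 = p%:R.
  apply: (mulIf (invr_neq0 p_nz)).
  by rewrite mulfV // -abs_p -(absM habs) mulVf // abs1.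
apply/eqP/negP => /negP x_nz.
by have := hx (x^-1 * p%:R^-1); rewrite mulVKf // abs_invp leNgt p_gt1.
Qed.

Theorem lemma2p10 (p : nat) (F : fieldType) (nrm : F -> rat) (X : Type)
  (hp : prime p) (hF : is_Qp p nrm)
  (hX : exists f : X -> nat, injective f)
  (A Astar : (X -> F) -> (X -> F))
  (hA : is_operator nrm A) (hAstar : is_operator nrm Astar)
  (hadj : is_adjoint nrm A Astar) :
  forall xi : X -> F, kerop nrm A xi <-> perp nrm (imop nrm Astar) xi.
Proof.
have habs := Qp_ultrametric_abs hF.
move=> xi; split.
  move=> [xiQ Axi0]; split=> // _ [zeta [zetaQ ->]].
  apply: (pairing_eq_trivial habs (pairing_eq_sym habs (hadj _ _ xiQ zetaQ))).
  by rewrite Axi0; apply: pairing_trivial0l.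
move=> [xiQ xi_perp]; split=> //.
have [f f_inj] := hX.
apply: functional_extensionality => i; apply: (Qp_mul_le1_eq0 hp hF) => a.
have vQ := point_vec_QpX habs i a f_inj.
apply: (pairing_trivial_point_vec habs f_inj).
apply: (pairing_eq_trivial habs (hadj _ _ xiQ vQ)).
by apply: xi_perp; exists (point_vec f i a).
Qed.
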